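(* Let $\mathbf{A}\in\mathbb{R}^{m\times n}$ with $m<n$, let $\mathbf{x}^*=(x_1^*,\dots,x_n^* )^T\in\mathbb{R}^n$, let $\mathbf{y}=\mathbf{A}\mathbf{x}^*$, and let $\mathbf{T}\subseteq\{1,\dots,n\}$ be arbitrary (it may contain indices outside the support of $\mathbf{x}^*$). Let $\mathbf{N}=\{j: x_j^*\neq 0\}$, $\mathbf{T}^c=\{1,\dots,n\}\setminus\mathbf{T}$, $\boldsymbol{\Delta}=\mathbf{N}\setminus\mathbf{T}$, and let $\mathbf{F}$ be the family of all subsets of $\boldsymbol{\Delta}$ (including $\emptyset$ and $\boldsymbol{\Delta}$). Then $\mathbf{x}^*$ is the unique solution of $$\min_{\mathbf{x}\in\mathbb{R}^n}\ \|\mathbf{x}_{\mathbf{T}^c}\|_1\quad\text{s.t.}\quad \mathbf{y}=\mathbf{A}\mathbf{x}$$ if and only if for every $\mathbf{I}\in\mathbf{F}$ and every $\boldsymbol{\delta}=(\delta_1,\dots,\delta_n)^T\in\mathbb{R}^n$ satisfying $$\mathbf{A}\boldsymbol{\delta}=\mathbf{0},\quad \|\boldsymbol{\delta}\|_1=1,\quad \delta_k x_k^*>0\ \text{for } k\in\mathbf{I},\quad \delta_k x_k^*\le 0\ \text{for } k\in\boldsymbol{\Delta}\setminus\mathbf{I},$$ one has $$\sum_{k\in\mathbf{T}^c\setminus\mathbf{I}}|\delta_k|-\sum_{k\in\mathbf{I}}|\delta_k|>0.$$ (Equivalently: for each $\mathbf{I}\in\mathbf{F}$ for which this constraint set is nonempty,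 the objective $\sum_{k\in\mathbf{T}^c\setminus\mathbf{I}}|\delta_k|-\sum_{k\in\mathbf{I}}|\delta_k|$ is strictly positive on the whole constraint set.)
   Context: For $\mathbf{x}\in\mathbb{R}^n$ and an index set $\mathbf{S}\subseteq\{1,\dots,n\}$, $\mathbf{x}_{\mathbf{S}}$ denotes the vector of entries of $\mathbf{x}$ with indices in $\mathbf{S}$. The optimization problem $\min\|\mathbf{x}_{\mathbf{T}^c}\|_1$ s.t. $\mathbf{y}=\mathbf{A}\mathbf{x}$ is called modified-CS, and $\mathbf{T}$ is the ''known part'' of the support. *)

(* real numbers abstracted as an arbitrary realFieldType. *)
From HB Require Import structures.
From mathcomp Require Import all_boot all_order all_algebra.
Set Implicit Arguments. Unset Strict Implicit. Unset Printing Implicit Defensive.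
Import Order.TTheory GRing.Theory Num.Theory.
Local Open Scope ring_scope.

Definition l1_on (R : realFieldType) (n : nat) (S : {set 'I_n}) (x : 'cV[R]_n) : R :=
  \sum_(i in S) `|x i 0|.

Definition l1 (R : realFieldType) (n : nat) (x : 'cV[R]_n) : R :=
  \sum_(i < n) `|x i 0|.

Definition supp (R : realFieldType) (n : nat) (x : 'cV[R]_n) : {set 'I_n} :=
  [set j | x j 0 != 0].

Definition unique_modcs_solution (R : realFieldType) (m n : nat)
    (A : 'M[R]_(m, n)) (y : 'cV[R]_m) (T : {set 'I_n}) (x0 : 'cV[R]_n) : Prop :=
  A *m x0 = y /\
  forall x : 'cV[R]_n, A *m x = y -> x <> x0 -> l1_on (~: T) x0 < l1_on (~: T) x.

From HB Require Import structures.
From mathcomp Require Import all_boot all_order all_algebra.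
From mathcomp Require Import lra.
Import Order.TTheory GRing.Theory Num.Theory.
Local Open Scope ring_scope.
Set Implicit Arguments.
Unset Strict Implicit.

(* Every feasible point of  min ||x_{T^c}||_1  s.t.  A x = A xs  is  xs - d  with
   A d = 0.  For a sign pattern  I  inside the unknown support and a direction  d
   whose entries on  S \ I  do not agree in sign with  xs  (S = T^c), define the
   gap  Q_{S,I}(d) = ||d_{S\I}||_1 - ||d_I||_1.  Coordinatewise, |x_k - d_k| is
   exactly |x_k| + |d_k| off  I  (opposite signs), and at least |x_k| - |d_k| on
   I, with equality when the signs agree and |d_k| <= |x_k|.  Summing gives
   - [cost_lower]  ||(xs - d)_S||_1 >= ||xs_S||_1 + Q_{S,I}(d),
   - [cost_exact]  equality when moreover d agrees in sign with xs on I and is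
     dominated by xs there — which holds for  t d  once  t > 0  is small
     ([exists_small_step]).
   Since Q is positively homogeneous, the condition on unit-norm directions is
   equivalent to uniqueness: [cost_exact] turns uniqueness into Q > 0 on every
   admissible direction, and [cost_lower] applied to  d = xs - x  with  I  its
   own sign pattern turns Q > 0 into a strict cost increase. *)

Lemma norm_sub_opp_sign (R : realDomainType) (a b : R) :
  a * b <= 0 -> `|a - b| = `|a| + `|b|.
Proof.
have [a0|a0] := lerP 0 a; have [b0|b0] := lerP 0 b => ab.
- have ab0 : a * b = 0 by apply/le_anti; rewrite ab mulr_ge0.
  move/eqP: ab0; rewrite mulf_eq0 => /orP[/eqP->|/eqP->].
    by rewrite sub0r normrN normr0 add0r.
  by rewrite subr0 normr0 addr0.
- by rewrite (ger0_norm a0) (ltr0_norm b0) ger0_norm; lra.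
- by rewrite (ltr0_norm a0) (ger0_norm b0) ler0_norm; lra.
- by move: ab; rewrite leNgt nmulr_rgt0 ?b0.
Qed.

Lemma norm_sub_same_sign (R : realDomainType) (a b : R) :
  0 < a * b -> `|b| <= `|a| -> `|a - b| = `|a| - `|b|.
Proof.
have [a0|a0] := lerP 0 a; have [b0|b0] := lerP 0 b => ab.
- by rewrite (ger0_norm a0) (ger0_norm b0) => ba; rewrite ger0_norm; lra.
- by have := mulr_ge0_le0 a0 (ltW b0); lra.
- by have := mulr_le0_ge0 (ltW a0) b0; lra.
- by rewrite (ltr0_norm a0) (ltr0_norm b0) => ba; rewrite ler0_norm; lra.
Qed.

Section Gap.
Variables (R : realFieldType) (n : nat).
Implicit Types (S I : {set 'I_n}) (x d : 'cV[R]_n).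

Definition gap S I d : R := l1_on (S :\: I) d - l1_on I d.

Definition signed_abs I d (k : 'I_n) : R :=
  if k \in I then - `|d k 0| else `|d k 0|.

Lemma gap_signed_abs S I d :
  I \subset S -> gap S I d = \sum_(k in S) signed_abs I d k.
Proof.
move=> sIS; rewrite /gap (big_setID I) /= (setIidPr sIS) addrC /l1_on -sumrN.
congr (_ + _); apply: eq_bigr => k; rewrite /signed_abs.
  by rewrite !inE => /andP[/negbTE ->].
by move=> ->.
Qed.

Lemma l1_onZ S (c : R) d : 0 <= c -> l1_on S (c *: d) = c * l1_on S d.
Proof.
by move=> c0; rewrite /l1_on mulr_sumr; apply: eq_bigr => k _; rewrite mxE normrM ger0_norm.
Qed.

Lemma l1Z (c : R) d : 0 <= c -> l1 (c *: d) = c * l1 d.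
Proof.
by move=> c0; rewrite /l1 mulr_sumr; apply: eq_bigr => k _; rewrite mxE normrM ger0_norm.
Qed.

Lemma gapZ S I (c : R) d : 0 <= c -> gap S I (c *: d) = c * gap S I d.
Proof. by move=> c0; rewrite /gap !l1_onZ // mulrBr. Qed.

Lemma l1_gt0 d : d != 0 -> 0 < l1 d.
Proof.
move=> d0; rewrite lt_def sumr_ge0 // andbT; apply: contra d0 => /eqP l1d0.
apply/eqP/matrixP => i j; rewrite ord1 mxE.
by apply/eqP; rewrite -normr_eq0; apply/eqP/(psumr_eq0P _ l1d0).
Qed.

Lemma cost_lower S I x d :
  I \subset S -> (forall k, k \in S :\: I -> d k 0 * x k 0 <= 0) ->
  l1_on S x + gap S I d <= l1_on S (x - d).
Proof.
move=> sIS opp; rewrite gap_signed_abs // /l1_on -big_split /=.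
apply: ler_sum => k kS; rewrite !mxE /signed_abs; case: ifPn => kI.
  exact: lerB_dist.
by rewrite norm_sub_opp_sign // mulrC opp // inE kI.
Qed.

Lemma cost_exact S I x d :
  I \subset S ->
  (forall k, k \in I -> 0 < d k 0 * x k 0 /\ `|d k 0| <= `|x k 0|) ->
  (forall k, k \in S :\: I -> d k 0 * x k 0 <= 0) ->
  l1_on S (x - d) = l1_on S x + gap S I d.
Proof.
move=> sIS same opp; rewrite gap_signed_abs // /l1_on -big_split /=.
apply: eq_bigr => k kS; rewrite !mxE /signed_abs; case: ifPn => kI.
  by have [dx dom] := same k kI; rewrite norm_sub_same_sign // mulrC.
by rewrite norm_sub_opp_sign // mulrC opp // inE kI.
Qed.

(* Outside the support of x the sign condition holds trivially. *)
Lemma opp_sign_off_supp S I x d :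
  (forall k, k \in (supp x :&: S) :\: I -> d k 0 * x k 0 <= 0) ->
  forall k, k \in S :\: I -> d k 0 * x k 0 <= 0.
Proof.
move=> opp k; rewrite !inE => /andP[kI kS].
have [x0|xn0] := eqVneq (x k 0) 0; first by rewrite x0 mulr0.
by apply: opp; rewrite !inE kI xn0.
Qed.

Lemma exists_small_step x d :
  exists2 t : R, 0 < t & forall k, x k 0 != 0 -> t * `|d k 0| <= `|x k 0|.
Proof.
pose s := \sum_(k | x k 0 != 0) `|d k 0| / `|x k 0|.
have s0 : 0 <= s by apply: sumr_ge0 => k _; rewrite divr_ge0.
exists (1 + s)^-1; first by rewrite invr_gt0; lra.
move=> k xk; have xk0 : 0 < `|x k 0| by rewrite normr_gt0.
have dk : `|d k 0| / `|x k 0| <= s.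
  by rewrite /s (bigD1 k) //= lerDl sumr_ge0 // => i _; rewrite divr_ge0.
rewrite mulrC ler_pdivrMr ?ltr_pwDl //; move: dk; rewrite ler_pdivrMr //; nra.
Qed.

End Gap.

Section Characterisation.
Variables (R : realFieldType) (m n : nat) (A : 'M[R]_(m, n)).
Variables (xs : 'cV[R]_n) (T : {set 'I_n}).

Local Notation Delta := (supp xs :\: T).

Lemma Delta_sub_compl : Delta \subset ~: T.
Proof. by rewrite setDE subsetIr. Qed.

Definition null_space_property : Prop :=
  forall I : {set 'I_n}, I \subset Delta ->
  forall d : 'cV[R]_n, A *m d = 0 -> l1 d = 1 ->
    (forall k, k \in I -> 0 < d k 0 * xs k 0) ->
    (forall k, k \in Delta :\: I -> d k 0 * xs k 0 <= 0) ->
    0 < gap (~: T) I d.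

(* Uniqueness forces the gap to be positive on every admissible direction:
   moving from xs by a small multiple of d changes the cost by exactly t Q. *)
Lemma unique_gap_pos :
  unique_modcs_solution A (A *m xs) T xs ->
  null_space_property.
Proof.
case=> _ uniq I sIDelta d Ad l1d pos opp.
have sIT := subset_trans sIDelta Delta_sub_compl.
have [t t0 small] := exists_small_step xs d.
have d0 : d != 0.
  apply: contra_eq_neq l1d => ->.
  by rewrite /l1 big1 1?eq_sym ?oner_eq0 // => k _; rewrite mxE normr0.
have same k : k \in I -> 0 < (t *: d) k 0 * xs k 0 /\ `|(t *: d) k 0| <= `|xs k 0|.
  move=> kI; have := subsetP sIDelta k kI; rewrite !inE => /andP[_ xk].
  by rewrite mxE -mulrA mulr_gt0 ?pos // normrM gtr0_norm ?small.
have opp_td : forall k, k \in ~: T :\: I -> (t *: d) k 0 * xs k 0 <= 0.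
  move=> k kD; apply: (opp_sign_off_supp _ kD) => j; rewrite -setDE => jD.
  by rewrite mxE -mulrA; apply: mulr_ge0_le0 (ltW t0) (opp _ jD).
have feasible : A *m (xs - t *: d) = A *m xs.
  by rewrite mulmxBr -scalemxAr Ad scaler0 subr0.
have moved : xs - t *: d <> xs.
  by move/eqP; rewrite subr_eq addrC -subr_eq subrr eq_sym scaler_eq0 (gt_eqF t0) (negbTE d0).
have := uniq _ feasible moved.
by rewrite (cost_exact sIT same opp_td) gapZ ?ltW // ltrDl pmulr_rgt0.
Qed.

(* Conversely, writing a competitor as  x = xs - e  with  I  the sign pattern of
   e on Delta, the gap of e is positive and bounds the cost increase from below. *)
Lemma gap_pos_unique :
  null_space_property ->
  unique_modcs_solution A (A *m xs) T xs.
Proof.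
move=> gap_pos; split=> // x Ax nx.
pose e := xs - x; pose c := (l1 e)^-1.
have Ae : A *m e = 0 by rewrite mulmxBr Ax subrr.
have e0 : e != 0 by rewrite subr_eq0 eq_sym; apply/eqP.
have c0 : 0 < c by rewrite invr_gt0 l1_gt0.
pose I := [set k in Delta | 0 < e k 0 * xs k 0].
have sIDelta : I \subset Delta by apply/subsetP => k; rewrite inE => /andP[].
have opp : forall k, k \in Delta :\: I -> e k 0 * xs k 0 <= 0.
  by move=> k /setDP[kD]; rewrite inE kD /= -leNgt.
have gap_e : 0 < gap (~: T) I e.
  have Ace : A *m (c *: e) = 0 by rewrite -scalemxAr Ae scaler0.
  have unit : l1 (c *: e) = 1 by rewrite l1Z ?ltW // mulVf ?gt_eqF ?l1_gt0.
  have pos k : k \in I -> 0 < (c *: e) k 0 * xs k 0.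
    by move=> /setIdP[_ ek]; rewrite mxE -mulrA; apply: mulr_gt0.
  have opp_c k : k \in Delta :\: I -> (c *: e) k 0 * xs k 0 <= 0.
    by move=> kD; rewrite mxE -mulrA; apply: mulr_ge0_le0 (ltW c0) (opp _ kD).
  have := gap_pos I sIDelta (c *: e) Ace unit pos opp_c.
  by rewrite gapZ ?ltW // pmulr_rgt0.
have opp_all : forall k, k \in ~: T :\: I -> e k 0 * xs k 0 <= 0.
  by move=> k kD; apply: (opp_sign_off_supp _ kD) => j; rewrite -setDE; apply: opp.
have := cost_lower (subset_trans sIDelta Delta_sub_compl) opp_all.
by rewrite /e subKr; lra.
Qed.

End Characterisation.

Unset Implicit Arguments.

Theorem theorem1 (R : realFieldType) (m n : nat) (A : 'M[R]_(m, n))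
    (xs : 'cV[R]_n) (T : {set 'I_n}) :
  (m < n)%N ->
  unique_modcs_solution A (A *m xs) T xs <->
  (forall I : {set 'I_n}, I \subset (supp xs :\: T) ->
     forall d : 'cV[R]_n,
       A *m d = 0 ->
       l1 d = 1 ->
       (forall k, k \in I -> 0 < d k 0 * xs k 0) ->
       (forall k, k \in (supp xs :\: T) :\: I -> d k 0 * xs k 0 <= 0) ->
       0 < l1_on (~: T :\: I) d - l1_on I d).
Proof.
move=> _; split; [exact: unique_gap_pos | exact: gap_pos_unique].
Qed.
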